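(* Let $G$ be a graph obtained as follows: start with a connected bipartite graph (the core) with bipartition $X\sqcup Y$, $X=\{x_1,\dots,x_n\}$, $Y=\{y_1,\dots,y_m\}$, $n,m\ge 1$; attach $f_i\ge 1$ leaves (new degree-one vertices adjacent only to $x_i$) to each $x_i$; and attach $t_j\ge 0$ pendant triangles to each $y_j$ (a pendant triangle at $y_j$ consists of two new vertices $u,v$ with edges $\{y_j,u\},\{y_j,v\},\{u,v\}$). Let $T=\sum_{j=1}^m t_j$. Then $P_G(-1)=(-1)^{n+T}\in\{\pm1\}$. In particular, $\mathfrak a(G)=0$.
   Context: The independence polynomial of a graph $G$ is $P_G(x)=\sum_i g_ix^i$, where $g_i$ is the number of independent sets of size $i$. For $G$ on vertex set $[N]$, let $S=K[x_1,\dots,x_N]$ ($K$ a field), $I(G)$ the edge ideal generated by $x_ix_j$ for edges $\{i,j\}$, and $\alpha(G)$ the independence number (equal to $\dim S/I(G)$). Writing the Hilbert series of $S/I(G)$ uniquely as $h_G(t)/(1-t)^{\alpha(G)}$ with $h_G(t)$ a polynomial with nonzero leading coefficient, the $\mathfrak a$-invariant is $\mathfrak a(G)=\deg h_G(t)-\alpha(G)$. *)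

From HB Require Import structures.
From mathcomp Require Import all_boot all_order all_algebra.
Set Implicit Arguments. Unset Strict Implicit. Unset Printing Implicit Defensive.
Import Order.TTheory GRing.Theory Num.Theory.
Local Open Scope ring_scope.

Definition indep (V : finType) (adj : rel V) (S : {set V}) : bool :=
  [forall u in S, forall v in S, ~~ adj u v].

Definition indep_count (V : finType) (adj : rel V) (i : nat) : nat :=
  #|[set S : {set V} | indep adj S & (#|S| == i)%N]|.

Definition indep_poly (V : finType) (adj : rel V) : {poly int} :=
  \poly_(i < #|V|.+1) (indep_count adj i)%:Z.

Definition indep_number (V : finType) (adj : rel V) : nat :=
  (\max_(S : {set V} | indep adj S) #|S|)%N.

(* Hilbert function of S/I(G) in degree d: S/I(G) is a monomial quotient, so
   its degree-d component has as K-basis the degree-d monomials x^a not in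
   I(G), i.e. those with no edge {u,v} such that x_u x_v divides x^a.
   Exponent vectors of degree d have entries <= d, hence the 'I_d.+1 range. *)
Definition hilb_fun (V : finType) (adj : rel V) (d : nat) : nat :=
  #|[set a : {ffun V -> 'I_d.+1} |
      (\sum_(v : V) (a v : nat) == d)%N &&
      [forall u, forall v, adj u v ==> ((a u == 0 :> nat) || (a v == 0 :> nat))]]|.

(* Coefficients of h_G(t) = HS(t) * (1-t)^alpha, where HS(t) = sum_d H(d) t^d. *)
Definition hcoef (V : finType) (adj : rel V) (k : nat) : int :=
  let al := indep_number adj in
  \sum_(i < al.+1 | (i <= k)%N)
     ((-1) ^+ i * ('C(al, i))%:Z * (hilb_fun adj (k - i))%:Z)%R.

Definition is_ainv (V : finType) (adj : rel V) (a : int) : Prop :=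
  exists D : nat, hcoef adj D != 0%R /\ (forall k, (D < k)%N -> hcoef adj k = 0%R)
                  /\ a = (D%:Z - (indep_number adj)%:Z)%R.

Definition core_adj (n m : nat) (c : 'I_n -> 'I_m -> bool) : rel ('I_n + 'I_m) :=
  fun u v => match u, v with
             | inl x, inr y => c x y
             | inr y, inl x => c x y
             | _, _ => false
             end.

Definition core_connected (n m : nat) (c : 'I_n -> 'I_m -> bool) : Prop :=
  forall u v : 'I_n + 'I_m, connect (core_adj c) u v.

(* Vertices: X, Y, leaves (i,k) with k < f i attached to x_i, and triangle
   vertices ((j,k),b) with k < t j, b : bool (the two new vertices u,v of the
   k-th pendant triangle at y_j). *)
Definition gV (n m : nat) (f : 'I_n -> nat) (t : 'I_m -> nat) : finType :=
  ('I_n + 'I_m + {i : 'I_n & 'I_(f i)} + ({j : 'I_m & 'I_(t j)} * bool))%type.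

Definition gadj0 (n m : nat) (c : 'I_n -> 'I_m -> bool)
    (f : 'I_n -> nat) (t : 'I_m -> nat) : rel (gV f t) :=
  fun u v => match u, v with
             | inl (inl (inl x)), inl (inl (inr y)) => c x y
             | inl (inl (inl x)), inl (inr l) => tag l == x
             | inl (inl (inr y)), inr (s, _) => tag s == y
             | inr (s, false), inr (s', true) => s == s'
             | _, _ => false
             end.

Definition gadj (n m : nat) (c : 'I_n -> 'I_m -> bool)
    (f : 'I_n -> nat) (t : 'I_m -> nat) : rel (gV f t) :=
  fun u v => gadj0 c u v || gadj0 c v u.
Arguments gadj {n m} c f t.
Arguments gV {n m} f t.

From HB Require Import structures.
From mathcomp Require Import all_boot all_order all_algebra.
From mathcomp Require Import ring.
Import Order.TTheory GRing.Theory Num.Theory.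

(* The Hilbert series of S/I(G) is the sum, over the independent sets S, of
   (t/(1-t))^|S|: a monomial outside I(G) is a vector of positive exponents on
   an independent support. Hence h_G(t) = sum_S t^|S| (1-t)^(alpha-|S|), which
   has degree at most alpha and coefficient (-1)^alpha P_G(-1) at t^alpha, so
   a(G) = 0 as soon as P_G(-1) <> 0. Formally the series is only handled modulo
   t^(D+1), where all exponents are bounded by D.

   For the graph of the theorem, P_G(-1) = sum_S (-1)^|S| is computed by a
   sign-reversing involution on independent sets: if some x_i is outside S,
   toggle a fixed leaf of x_i; otherwise no y_j is in S (every y_j has a
   neighbour in X, by connectivity), and if some pendant triangle has its
   vertex u outside S, toggle its vertex v. The only fixed set is X together
   with the vertex u of every triangle, of size n + T. *)

Open Scope ring_scope.

Section CongruenceModXn.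
Context {R : comNzRingType}.
Implicit Types p q : {poly R}.

Definition eqmodXn N p q := exists r, p = q + 'X^N * r.

Lemma eqmodXn_refl N p : eqmodXn N p p.
Proof. by exists 0; rewrite mulr0 addr0. Qed.

Lemma eqmodXnD N p1 q1 p2 q2 : eqmodXn N p1 q1 -> eqmodXn N p2 q2 ->
  eqmodXn N (p1 + p2) (q1 + q2).
Proof. by move=> [r1 ->] [r2 ->]; exists (r1 + r2); ring. Qed.

Lemma eqmodXnM N p1 q1 p2 q2 : eqmodXn N p1 q1 -> eqmodXn N p2 q2 ->
  eqmodXn N (p1 * p2) (q1 * q2).
Proof.
by move=> [r1 ->] [r2 ->]; exists (r1 * q2 + q1 * r2 + 'X^N * r1 * r2); ring.
Qed.

Lemma eqmodXnX N p q i : eqmodXn N p q -> eqmodXn N (p ^+ i) (q ^+ i).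
Proof.
move=> pq; elim: i => [|i IH]; first by rewrite !expr0; apply: eqmodXn_refl.
by rewrite !exprS; apply: eqmodXnM.
Qed.

Lemma eqmodXn_sum N (I : Type) (s : seq I) (P : pred I) (F G : I -> {poly R}) :
  (forall i, P i -> eqmodXn N (F i) (G i)) ->
  eqmodXn N (\sum_(i <- s | P i) F i) (\sum_(i <- s | P i) G i).
Proof.
move=> FG; elim/big_rec2: _ => [|i p q Pi]; first exact: eqmodXn_refl.
exact/eqmodXnD/FG.
Qed.

Lemma eqmodXn_coef N p q k : eqmodXn N p q -> (k < N)%N -> p`_k = q`_k.
Proof. by move=> [r ->] kN; rewrite coefD coefXnM kN addr0. Qed.

Lemma coef_1subX_exp b k : ((1 - 'X) ^+ b)`_k = (-1) ^+ k * 'C(b, k)%:R :> R.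
Proof.
elim: b k => [|b IH] k.
  by rewrite expr0 coefC; case: k => [|k] /=; rewrite ?mulr1 ?mulr0.
rewrite exprS mulrBl mul1r coefB mulrC coefMX.
case: k => [|k] /=; first by rewrite subr0 IH !bin0.
by rewrite !IH binS natrD exprS; ring.
Qed.

Definition geomX D : {poly R} := \sum_(1 <= e < D.+1) 'X^e.

Lemma geomX0 : geomX 0 = 0.
Proof. by rewrite /geomX big_geq. Qed.

Lemma geomXS D : geomX D.+1 = geomX D + 'X^(D.+1).
Proof. by rewrite /geomX big_nat_recr. Qed.

Lemma mul_1subX_geomX D : (1 - 'X) * geomX D = 'X - 'X^(D.+1).
Proof.
elim: D => [|D IH]; first by rewrite geomX0 mulr0 expr1 subrr.
by rewrite geomXS mulrDr IH !exprS; ring.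
Qed.

Lemma eqmodXn_geomX D k : eqmodXn D.+1 (geomX (D + k)) (geomX D).
Proof.
elim: k => [|k [r IH]]; first by rewrite addn0; apply: eqmodXn_refl.
by rewrite addnS geomXS IH; exists (r + 'X^k); rewrite mulrDr -exprD addSn addrA.
Qed.

End CongruenceModXn.

Section HilbertSeries.
Variables (V : finType) (adj : rel V).

Lemma indepP (S : {set V}) :
  reflect (forall u v, u \in S -> v \in S -> ~~ adj u v) (indep adj S).
Proof.
apply: (iffP forallP) => [h u v uS vS | h u].
  by have /implyP/(_ uS)/forallP/(_ v)/implyP/(_ vS) := h u.
by apply/implyP => uS; apply/forallP => v; apply/implyP => vS; apply: h.
Qed.

Lemma card_le_indep_number {S : {set V}} :
  indep adj S -> (#|S| <= indep_number adj)%N.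
Proof. exact: leq_bigmax_cond. Qed.

Lemma horner_indep_poly x :
  (indep_poly adj).[x] = \sum_(S : {set V} | indep adj S) x ^+ #|S|.
Proof.
rewrite horner_poly.
rewrite (partition_big (fun S : {set V} => inord #|S| : 'I_#|V|.+1) xpredT) //=.
apply: eq_bigr => i _; rewrite /indep_count -sum1_card -natz natr_sum mulr_suml.
apply: eq_big => S; rewrite inE; last by case/andP=> _ /eqP ->; rewrite mul1r.
case: (indep adj S) => //=.
have ltSV : (#|S| < #|V|.+1)%N by rewrite ltnS max_card.
by apply/eqP/eqP => [->|<-]; rewrite ?inord_val ?inordK.
Qed.

Definition supp {D} (a : {ffun V -> 'I_D.+1}) : {set V} := [set v | a v != 0%N :> nat].

(* Counts the monomials outside I(G) with all exponents at most D by total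
   degree; it agrees with the Hilbert series below degree D + 1. *)
Definition hilb_trunc D : {poly int} :=
  \sum_(a : {ffun V -> 'I_D.+1} | indep adj (supp a)) 'X^(\sum_v (a v : nat)).

Lemma hilb_fun_coef d : (hilb_fun adj d)%:Z = (hilb_trunc d)`_d.
Proof.
rewrite /hilb_trunc coef_sum /hilb_fun -sum1_card -natz natr_sum.
rewrite big_mkcond [RHS]big_mkcond /=; apply: eq_bigr => a _; rewrite inE coefXn.
have -> : [forall u, forall v, adj u v ==> (a u == 0 :> nat) || (a v == 0 :> nat)]
    = indep adj (supp a).
  apply/forallP/indepP => [h u v | h u]; rewrite ?inE.
    move=> au av; apply/negP => auv.
    by have /forallP/(_ v) := h u; rewrite auv (negbTE au) (negbTE av).
  apply/forallP => v; apply/implyP => auv.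
  by apply: contraTT auv => /norP[au av]; apply: h; rewrite inE.
by rewrite eq_sym andbC; case: (indep _ _); case: (_ == _).
Qed.

Lemma sum_supp_eq D (S : {set V}) :
  \sum_(a : {ffun V -> 'I_D.+1} | supp a == S) 'X^(\sum_v (a v : nat))
    = geomX D ^+ #|S| :> {poly int}.
Proof.
pose F v (e : 'I_D.+1) : {poly int} := ((e != 0%N :> nat) == (v \in S))%:R * 'X^e.
have sumF v : \sum_e F v e = if v \in S then geomX D else 1.
  rewrite /F big_ord_recl /= /geomX big_add1 /= big_mkord; case: (v \in S).
    by rewrite mul0r add0r; apply: eq_bigr => e _; rewrite mul1r.
  by rewrite mul1r expr0 big1 ?addr0 // => e _; rewrite mul0r.
have -> : geomX D ^+ #|S| = \prod_v \sum_e F v e.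
  by rewrite (eq_bigr _ (fun v _ => sumF v)) -big_mkcond prodr_const.
rewrite bigA_distr_bigA big_mkcond /=; apply: eq_bigr => a _.
rewrite big_split /= -expr_sum.
have -> : \prod_v ((a v != 0%N :> nat) == (v \in S))%:R
    = (supp a == S)%:R :> {poly int}.
  case: eqP => [<- | neqS]; first by rewrite big1 // => v _; rewrite inE eqxx.
  have /existsP [v av] : [exists v, (a v != 0%N :> nat) != (v \in S)].
    apply: contra_notT neqS => /existsPn suppS; apply/setP => v.
    by rewrite /supp inE; have /negbNE/eqP := suppS v.
  by rewrite (bigD1 v) //= (negbTE av) mul0r.
by case: (supp a == S); rewrite ?mul1r ?mul0r.
Qed.

Lemma hilb_trunc_indep D :
  hilb_trunc D = \sum_(S : {set V} | indep adj S) geomX D ^+ #|S|.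
Proof.
rewrite /hilb_trunc (partition_big supp (indep adj)) //=.
apply: eq_bigr => S indS; rewrite -sum_supp_eq; apply: eq_bigl => a.
by case: eqP => [->|]; rewrite ?indS ?andbF.
Qed.

Lemma eqmodXn_hilb_trunc D k :
  eqmodXn D.+1 (hilb_trunc (D + k)) (hilb_trunc D).
Proof.
by rewrite !hilb_trunc_indep; apply: eqmodXn_sum => S _; apply/eqmodXnX/eqmodXn_geomX.
Qed.

Lemma hcoef_hilb_trunc k :
  hcoef adj k = ((1 - 'X) ^+ indep_number adj * hilb_trunc k)`_k.
Proof.
set al := indep_number adj.
pose F j := (-1) ^+ j * 'C(al, j)%:R * (hilb_trunc k)`_(k - j).
have -> : hcoef adj k = \sum_(i < al.+1 | (i <= k)%N) F i.
  apply: eq_bigr => i ik; rewrite /F hilb_fun_coef -natz.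
  by have := eqmodXn_hilb_trunc (k - i) i; rewrite subnK // => /eqmodXn_coef ->.
rewrite coefM [RHS](eq_bigr (fun j : 'I_k.+1 => F j)) => [|j _]; last first.
  by rewrite coef_1subX_exp.
rewrite (big_ord_widen_cond (al + k).+1 (fun i => i <= k)%N F) ?ltnS ?leq_addr //.
rewrite (big_ord_widen (al + k).+1 F) ?ltnS ?leq_addl // big_mkcond [RHS]big_mkcond /=.
apply: eq_bigr => i _; rewrite !ltnS andbC; case: (leqP i al) => [//|ali].
by rewrite /F bin_small // mulr0 mul0r; case: ifP.
Qed.

Lemma hcoef_indep k : hcoef adj k = \sum_(S : {set V} | indep adj S)
  ('X^#|S| * (1 - 'X) ^+ (indep_number adj - #|S|))`_k.
Proof.
rewrite hcoef_hilb_trunc hilb_trunc_indep mulr_sumr coef_sum; apply: eq_bigr => S indS.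
rewrite -{1}(subnK (card_le_indep_number indS)) exprD -mulrA -exprMn mulrC.
apply: eqmodXn_coef (ltnSn k); apply: eqmodXnM (eqmodXn_refl _ _).
by apply: eqmodXnX; rewrite mul_1subX_geomX; exists (-1); ring.
Qed.

Lemma hcoef_indep_number :
  hcoef adj (indep_number adj) = (-1) ^+ indep_number adj * (indep_poly adj).[-1].
Proof.
rewrite hcoef_indep horner_indep_poly mulr_sumr; apply: eq_bigr => S indS.
have le_S := card_le_indep_number indS.
rewrite coefXnM ltnNge le_S coef_1subX_exp binn mulr1 -{2}(subnK le_S) exprD.
by rewrite /= -mulrA -expr2 sqrr_sign mulr1.
Qed.

Lemma hcoef_gt_indep_number k : (indep_number adj < k)%N -> hcoef adj k = 0.
Proof.
move=> alk; rewrite hcoef_indep big1 // => S indS.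
have le_S := card_le_indep_number indS.
rewrite coefXnM ltnNge (leq_trans le_S (ltnW alk)) coef_1subX_exp bin_small ?mulr0 //.
by rewrite ltn_sub2r // (leq_ltn_trans le_S alk).
Qed.

Lemma is_ainv0 : (indep_poly adj).[-1] != 0 -> is_ainv adj 0.
Proof.
move=> P_neq0; exists (indep_number adj); split; last split.
- by rewrite hcoef_indep_number mulf_neq0 ?signr_eq0.
- exact: hcoef_gt_indep_number.
- by rewrite subrr.
Qed.

End HilbertSeries.

Lemma sum_sign_reversing_involution {R : numDomainType} {T : finType}
    {P : pred T} {g : T -> T} {w : T -> R} {x0 : T} :
  P x0 -> g x0 = x0 -> involutive g -> (forall x, P x -> P (g x)) ->
  (forall x, P x -> x != x0 -> w (g x) = - w x) ->
  \sum_(x | P x) w x = w x0.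
Proof.
move=> Px0 gx0 gK Pg w_g; rewrite (bigD1 x0) //=; set rest := \sum_(_ | _) _.
have P_g x : (P (g x) && (g x != x0)) = (P x && (x != x0)).
  congr (_ && _); first by apply/idP/idP => /Pg; rewrite ?gK.
  by rewrite -{1}gx0 (inj_eq (inv_inj gK)).
have rest_opp : rest = - rest.
  rewrite {1}/rest (reindex_inj (inv_inj gK)) /= -sumrN.
  by apply: eq_big => x; rewrite P_g // => /andP[]; apply: w_g.
suff -> : rest = 0 by rewrite addr0.
by apply/eqP; rewrite -[_ == 0](mulrn_eq0 _ 2) mulr2n {1}rest_opp addNr.
Qed.

Section Toggle.
Context {T : finType}.
Implicit Types (a b : T) (S : {set T}).

Definition toggle a S : {set T} := if a \in S then S :\ a else a |: S.

Lemma in_toggle a b S : (b \in toggle a S) = (if b == a then a \notin S else b \in S).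
Proof.
by rewrite /toggle; case: (boolP (a \in S)) => aS; rewrite !inE; case: eqP => // ->.
Qed.

Lemma toggleK a : involutive (toggle a).
Proof.
move=> S; apply/setP => b; rewrite !in_toggle.
by case: eqP => // ->; rewrite eqxx negbK.
Qed.

Lemma sign_card_toggle a S : (-1) ^+ #|toggle a S| = - (-1) ^+ #|S| :> int.
Proof.
rewrite /toggle; case: (boolP (a \in S)) => aS.
  by rewrite [in RHS](cardsD1 a) aS exprS mulN1r opprK.
by rewrite cardsU1 aS exprS mulN1r.
Qed.

Lemma indep_toggle (adj : rel T) a S :
  symmetric adj -> ~~ adj a a -> (forall w, w \in S -> ~~ adj a w) ->
  indep adj (toggle a S) = indep adj S.
Proof.
move=> adj_sym adj_irr a_free; apply/indepP/indepP => indS u v.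
  case: (eqVneq u a) => [-> _ vS|ua]; first exact: a_free.
  case: (eqVneq v a) => [-> uS _|va]; first by rewrite adj_sym a_free.
  by move=> uS vS; apply: indS; rewrite in_toggle ?(negbTE ua) ?(negbTE va).
rewrite !in_toggle; case: (eqVneq u a) => [->|ua]; case: (eqVneq v a) => [->|va] //=.
- by move=> _ vS; rewrite a_free.
- by move=> uS _; rewrite adj_sym a_free.
- exact: indS.
Qed.

Lemma pick_toggle {I : finType} {h : I -> T} {a} S :
  (forall i, h i != a) -> [pick i | h i \notin toggle a S] = [pick i | h i \notin S].
Proof. by move=> h_a; apply: eq_pick => i /=; rewrite in_toggle (negbTE (h_a i)). Qed.

End Toggle.

Section PendantGraph.
Variables (n m : nat) (c : 'I_n -> 'I_m -> bool) (f : 'I_n -> nat) (t : 'I_m -> nat).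
Hypothesis f_gt0 : forall i, (0 < f i)%N.
Hypothesis y_has_core_nbr : forall j, exists i, c i j.

Local Notation V := (gV f t).
Local Notation adj := (gadj c f t).

Definition xvert i : V := inl (inl (inl i)).
Definition yvert j : V := inl (inl (inr j)).
Definition first_leaf i : V :=
  inl (inr (Tagged (fun i => 'I_(f i)) (Ordinal (f_gt0 i)))).
Definition tri_u s : V := inr (s, true).
Definition tri_v s : V := inr (s, false).

Lemma gadj_sym : symmetric adj.
Proof. by move=> u v; rewrite /gadj orbC. Qed.

Lemma gadj_first_leaf i w : adj (first_leaf i) w -> w = xvert i.
Proof. by case: w => [[[x|y]|l]|[s []]] //; rewrite /gadj /= => /eqP ->. Qed.

Lemma gadj_tri_v s w : adj (tri_v s) w -> w = tri_u s \/ w = yvert (tag s).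
Proof.
case: w => [[[x|y]|l]|[s' []]] //; rewrite /gadj /= ?orbF => /eqP <-.
- by right.
- by left.
Qed.

Lemma indep_no_yvert {S : {set V}} j :
  indep adj S -> (forall i, xvert i \in S) -> yvert j \notin S.
Proof.
move=> /indepP indS allX; apply/negP => yS; have [i cij] := y_has_core_nbr j.
by have := indS _ _ (allX i) yS; rewrite /gadj /= cij.
Qed.

Definition flip (S : {set V}) : {set V} :=
  if [pick i | xvert i \notin S] is Some i then toggle (first_leaf i) S
  else if [pick s | tri_u s \notin S] is Some s then toggle (tri_v s) S
  else S.

Lemma flipK : involutive flip.
Proof.
have x_leaf i j : xvert j != first_leaf i by [].
have x_v s j : xvert j != tri_v s by [].
have u_v s s' : tri_u s' != tri_v s by apply/eqP; case.
move=> S; rewrite /flip.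
case Ex: [pick i | xvert i \notin S] => [i|].
  by rewrite (pick_toggle _ (x_leaf i)) Ex toggleK.
case Et: [pick s | tri_u s \notin S] => [s|]; last by rewrite Ex Et.
by rewrite (pick_toggle _ (x_v s)) Ex (pick_toggle _ (u_v s)) Et toggleK.
Qed.

Definition top_vert (u : 'I_n + {j : 'I_m & 'I_(t j)}) : V :=
  match u with inl i => xvert i | inr s => tri_u s end.

Definition top_set : {set V} := top_vert @: setT.

Lemma xvert_in_top i : xvert i \in top_set.
Proof. exact: (imset_f _ (in_setT (inl i))). Qed.

Lemma tri_u_in_top s : tri_u s \in top_set.
Proof. exact: (imset_f _ (in_setT (inr s))). Qed.

Lemma card_top_set : #|top_set| = (n + \sum_(j < m) t j)%N.
Proof.
rewrite card_imset; last by case=> [i|s] [i'|s'] //= [->].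
rewrite cardsT card_sum card_ord card_tagged sumnE big_map big_enum /=.
by congr (_ + _)%N; apply: eq_bigr => j _; rewrite card_ord.
Qed.

Lemma top_set_indep : indep adj top_set.
Proof. by apply/indepP => _ _ /imsetP[[i|s] _ ->] /imsetP[[i'|s'] _ ->]. Qed.

Lemma flip_top : flip top_set = top_set.
Proof.
rewrite /flip; case: pickP => [i|_]; first by rewrite xvert_in_top.
by case: pickP => [s|_] //; rewrite tri_u_in_top.
Qed.

Lemma indep_eq_top (S : {set V}) : indep adj S ->
  (forall i, xvert i \in S) -> (forall s, tri_u s \in S) -> S = top_set.
Proof.
move=> indS allX allU; have /indepP indS' := indS.
apply/setP => w; apply/idP/idP => [|/imsetP[[i|s] _ ->]]; [|exact: allX|exact: allU].
case: w => [[[i|j]|l]|[s []]] wS.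
- exact: xvert_in_top.
- by rewrite (negbTE (indep_no_yvert j indS allX)) in wS.
- by have := indS' _ _ (allX (tag l)) wS; rewrite /gadj /= eqxx.
- exact: tri_u_in_top.
- by have := indS' _ _ wS (allU s); rewrite /gadj /= eqxx.
Qed.

Lemma flip_indep (S : {set V}) : indep adj S -> indep adj (flip S).
Proof.
move=> indS; rewrite /flip; case: pickP => [i /= iS | noX].
  rewrite indep_toggle //; first exact: gadj_sym.
  by move=> w wS; apply: contraTN wS => /gadj_first_leaf ->.
case: pickP => [s /= sS | _] //.
rewrite indep_toggle //; first exact: gadj_sym.
move=> w wS; apply/negP => /gadj_tri_v [] ew; move: wS; rewrite ew ?(negbTE sS) //.
by rewrite (negbTE (indep_no_yvert _ indS _)) // => i; apply/negbFE/noX.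
Qed.

Lemma flip_sign (S : {set V}) : indep adj S -> S != top_set ->
  (-1) ^+ #|flip S| = - (-1) ^+ #|S| :> int.
Proof.
move=> indS; rewrite /flip; case: pickP => [i _|noX]; first by rewrite sign_card_toggle.
case: pickP => [s _|noU]; first by rewrite sign_card_toggle.
by case/eqP; apply: indep_eq_top => // [i|s]; apply/negbFE; rewrite ?noX ?noU.
Qed.

Lemma sum_indep_sign :
  \sum_(S : {set V} | indep adj S) (-1) ^+ #|S| = (-1) ^+ #|top_set| :> int.
Proof.
exact: (sum_sign_reversing_involution (P := indep adj)
  (w := fun S => (-1) ^+ #|S| : int) top_set_indep flip_top flipK flip_indep flip_sign).
Qed.

End PendantGraph.

Lemma core_nbr_of_connected {n m} {c : 'I_n -> 'I_m -> bool} :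
  (0 < n)%N -> core_connected c -> forall j, exists i, c i j.
Proof.
move=> n_gt0 conn j; case: (pickP (c^~ j)) => [i cij | no_nbr]; first by exists i.
have /connectP[[|w p] //= /andP[jw _] _] := conn (inr j) (inl (Ordinal n_gt0)).
by case: w jw => [i|j'] //=; rewrite no_nbr.
Qed.

Close Scope ring_scope.

Theorem theorem4p3 (n m : nat) (c : 'I_n -> 'I_m -> bool)
    (f : 'I_n -> nat) (t : 'I_m -> nat) :
  (0 < n)%N -> (0 < m)%N -> core_connected c ->
  (forall i, (0 < f i)%N) ->
  ((indep_poly (gadj c f t)).[-1] = (-1) ^+ (n + \sum_(j < m) t j))%R
  /\ is_ainv (gadj c f t) 0%R.
Proof.
move=> n_gt0 _ conn f_gt0.
have y_nbr := core_nbr_of_connected n_gt0 conn.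
have P_m1 : ((indep_poly (gadj c f t)).[-1] = (-1) ^+ (n + \sum_(j < m) t j))%R.
  by rewrite horner_indep_poly sum_indep_sign // card_top_set.
by split => //; apply: is_ainv0; rewrite P_m1 signr_eq0.
Qed.
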